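(* Let $p,q\ge2$ with $q-1=d(p-1)$ for a positive integer $d$, and let $j_2:F(q)\to F(p)$ be the homomorphism with $j_2(x_i)=x_i^{d}$. Then $$j_2\circ\phi_q^{\,q-1}=\phi_p^{\,d(p-1)}\circ j_2.$$
   Context: For $r\ge2$, $F(r)$ is the group given by the presentation $\langle x_0,x_1,\dots\mid x_i^{-1}x_jx_i=x_{j+r-1}\ (i<j)\rangle$ (the group of piecewise-linear orientation-preserving homeomorphisms of $[0,1]$ with breakpoints in $\mathbb{Z}[1/r]$ and slopes powers of $r$). The shift map $\phi_r:F(r)\to F(r)$ is the endomorphism with $\phi_r(x_i)=x_{i+1}$ for all $i\ge0$. The assignment $x_i\mapsto x_i^d$ respects the relations and defines an injective homomorphism $j_2:F(q)\to F(p)$. *)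

From mathcomp Require Import all_boot monoid.
Set Implicit Arguments. Unset Strict Implicit. Unset Printing Implicit Defensive.
Local Open Scope group_scope.

Definition F_relations (r : nat) (G : groupType) (x : nat -> G) : Prop :=
  forall i j : nat, (i < j)%N -> (x i)^-1 * x j * x i = x (j + r.-1)%N.

(* (G, x) is a presentation of F(r) = < x_0, x_1, ... | x_i^{-1} x_j x_i = x_{j+r-1} (i<j) >:
   the x_i satisfy the relations and (G, x) is universal among groups with such elements
   (every assignment satisfying the relations extends to a unique homomorphism). *)
Definition is_F_presentation (r : nat) (G : groupType) (x : nat -> G) : Prop :=
  F_relations r x /\
  forall (H : groupType) (y : nat -> H), F_relations r y ->
    exists! f : G -> H, monoid_morphism f /\ forall i, f (x i) = y i.

(* Both sides are homomorphisms out of F(q), hence determined by their values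
   on the generators x_i.  There the left side gives j2 (x_(i+q-1)) = x_(i+q-1)^d
   and the right side gives phi_p^(d(p-1)) (x_i^d) = x_(i+d(p-1))^d, and these
   agree because q - 1 = d (p - 1). *)
From HB Require Import structures.
From mathcomp Require Import all_boot monoid.
Set Implicit Arguments. Unset Strict Implicit. Unset Printing Implicit Defensive.
Local Open Scope group_scope.

Lemma monoid_morphism_comp (G H K : baseUMagmaType) (f : G -> H) (g : H -> K) :
  monoid_morphism f -> monoid_morphism g -> monoid_morphism (g \o f).
Proof.
move=> [f1 fM] [g1 gM]; split=> [|x y] /=; first by rewrite f1 g1.
by rewrite fM gM.
Qed.

Lemma monoid_morphism_iter (G : baseUMagmaType) (f : G -> G) n :
  monoid_morphism f -> monoid_morphism (iter n f).
Proof.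
move=> [f1 fM]; elim: n => [|n [IH1 IHM]]; first by split.
by split=> [|x y] /=; rewrite ?IH1 ?IHM.
Qed.

Section GroupMorphism.

Variables (G H : groupType) (f : G -> H).
Hypothesis fM : monoid_morphism f.
HB.instance Definition _ := isUMagmaMorphism.Build G H f fM.

Lemma monoid_morphismXn n : {morph f : x / x ^+ n}.
Proof. exact: gmulfXn. Qed.

Lemma F_relations_morph r (x : nat -> G) :
  F_relations r x -> F_relations r (f \o x).
Proof. by move=> Rx i j lt_ij; rewrite /= -gmulfV -!gmulfM Rx. Qed.

End GroupMorphism.

Lemma F_presentation_morph_eq r (G H : groupType) (x : nat -> G) (f g : G -> H) :
  is_F_presentation r x -> monoid_morphism f -> monoid_morphism g ->
  (forall i, f (x i) = g (x i)) -> f = g.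
Proof.
move=> [Rx univ] fM gM efg.
have [h [_ h_uniq]] := univ H (f \o x) (F_relations_morph fM Rx).
have eq_h k : monoid_morphism k -> (forall i, k (x i) = f (x i)) -> h = k.
  by move=> kM kx; apply: h_uniq.
by rewrite -(eq_h f) // (eq_h g) // => i; rewrite efg.
Qed.

Lemma iter_shift (T : Type) (f : T -> T) (x : nat -> T) n i :
  (forall i, f (x i) = x i.+1) -> iter n f (x i) = x (i + n)%N.
Proof.
move=> fx; elim: n => [|n IHn]; first by rewrite addn0.
by rewrite iterS IHn fx addnS.
Qed.

Theorem proposition13 (p q d : nat) (hp : (2 <= p)%N) (hq : (2 <= q)%N) (hd : (0 < d)%N)
  (hqd : (q - 1 = d * (p - 1))%N)
  (Fp Fq : groupType) (xp : nat -> Fp) (xq : nat -> Fq)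
  (HFp : is_F_presentation p xp) (HFq : is_F_presentation q xq)
  (phi_p : Fp -> Fp) (phi_q : Fq -> Fq) (j2 : Fq -> Fp)
  (hphi_p : monoid_morphism phi_p /\ forall i, phi_p (xp i) = xp i.+1)
  (hphi_q : monoid_morphism phi_q /\ forall i, phi_q (xq i) = xq i.+1)
  (hj2 : monoid_morphism j2 /\ forall i, j2 (xq i) = xp i ^+ d) :
  j2 \o iter (q - 1) phi_q = iter (d * (p - 1)) phi_p \o j2.
Proof.
case: hphi_p => phi_pM phi_px; case: hphi_q => phi_qM phi_qx; case: hj2 => j2M j2x.
have iter_phi_pM := monoid_morphism_iter (d * (p - 1)) phi_pM.
apply: (F_presentation_morph_eq HFq).
- exact: monoid_morphism_comp (monoid_morphism_iter _ phi_qM) j2M.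
- exact: monoid_morphism_comp j2M iter_phi_pM.
move=> i /=.
by rewrite iter_shift // j2x j2x (monoid_morphismXn iter_phi_pM) iter_shift // hqd.
Qed.
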